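(* Fix $x\in\mathbb{R}^{n}$ and $u\in\mathbb{R}^{n_a}$, and assume that $J_i P^{-1} J_j^\top = 0$ for all $i\neq j$, where $P=P(x)$ and $J_i=J_i(x)$. Then for each contact $i$, the vector $\nu_{\kappa,i} - J_i P^{-1} J_i^\top \lambda_{\kappa,i}$ is independent of $\kappa>0$.
   Context: $P(x)\in\mathbb{R}^{n\times n}$ is symmetric positive definite and $q(x,u)\in\mathbb{R}^n$. There are $n_c$ contacts; for each contact $i$, $J_i(x)\in\mathbb{R}^{3\times n}$ is the contact Jacobian, $\phi_i(x)\in\mathbb{R}$ the signed distance, $\mu_i>0$ the friction coefficient, $\mathcal{F}_i=\{(\lambda_n,\lambda_t)\in\mathbb{R}\times\mathbb{R}^2:\|\lambda_t\|_2\le\mu_i\lambda_n\}$ the friction cone and $\mathcal{F}_i^*=\{(\nu_n,\nu_t):\|\nu_t\|_2\le\nu_n/\mu_i\}$ its dual, and $\psi_i(\nu)=-\tfrac12\log(\nu_n^2/\mu_i^2-\|\nu_t\|_2^2)$ on the interior of $\mathcal{F}_i^*$. For $\kappa>0$, the smoothed next state $x_\kappa^+$ minimizes $\tfrac12 (x^+)^\top P(x)x^+ + q(x,u)^\top x^+ + \kappa\sum_{i=1}^{n_c}\psi_i(\nu_i)$ subject to $\nu_i = J_i(x)(x^+-x)+[\phi_i(x),0,0]^\top$; $\nu_{\kappa,i}$ and the contact forces $\lambda_{\kappa,i}$ satisfy the KKT conditions $P(x)x_\kappa^+ + q(x,u) - \sum_{i} J_i(x)^\top\lambda_{\kappa,i}=0$,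 $\nu_{\kappa,i}=J_i(x)(x_\kappa^+-x)+[\phi_i(x),0,0]^\top$, $\lambda_{\kappa,i}\in\mathcal{F}_i$, $\nu_{\kappa,i}\in\mathcal{F}_i^*$, $\lambda_{\kappa,i}\circ\nu_{\kappa,i}=\kappa e$, with $a\circ b=(a^\top b,\,a_0b_1+b_0a_1)$ for $a=(a_0,a_1),b=(b_0,b_1)\in\mathbb{R}\times\mathbb{R}^2$ and $e=(1,0,0)$. *)

From HB Require Import structures.
From mathcomp Require Import all_boot all_order all_algebra.
From mathcomp Require Import all_classical all_reals all_analysis.
Set Implicit Arguments. Unset Strict Implicit. Unset Printing Implicit Defensive.
Import Order.TTheory GRing.Theory Num.Theory.
Local Open Scope ring_scope.

Section Defs.
Variable R : realType.

(* components of a vector (a0, a_t) in R x R^2 represented as 'cV_3 *)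
Definition c0 (v : 'cV[R]_3) : R := v ord0 ord0.
Definition c1 (v : 'cV[R]_3) : R := v (inord 1) ord0.
Definition c2 (v : 'cV[R]_3) : R := v (inord 2) ord0.
Definition tnorm (v : 'cV[R]_3) : R := Num.sqrt (c1 v ^+ 2 + c2 v ^+ 2).

Definition e3 : 'cV[R]_3 := \col_(i < 3) (if i == ord0 then 1 else 0).

Definition in_cone (mu : R) (l : 'cV[R]_3) : Prop := tnorm l <= mu * c0 l.
Definition in_dual_cone (mu : R) (nu : 'cV[R]_3) : Prop := tnorm nu <= c0 nu / mu.
Definition in_dual_cone_int (mu : R) (nu : 'cV[R]_3) : Prop := tnorm nu < c0 nu / mu.

Definition psi (mu : R) (nu : 'cV[R]_3) : R :=
  - (1 / 2) * ln (c0 nu ^+ 2 / mu ^+ 2 - tnorm nu ^+ 2).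

Definition jprod (a b : 'cV[R]_3) : 'cV[R]_3 :=
  \col_(i < 3) (if i == ord0 then (a^T *m b) ord0 ord0
                else c0 a * b i ord0 + c0 b * a i ord0).

Definition sym_pos_def (n : nat) (P : 'M[R]_n) : Prop :=
  P^T = P /\ forall v : 'cV[R]_n, v != 0 -> 0 < (v^T *m P *m v) ord0 ord0.

Definition gap (n : nat) (J : 'M[R]_(3, n)) (phi : R) (x xp : 'cV[R]_n) : 'cV[R]_3 :=
  J *m (xp - x) + phi *: e3.

Definition smoothed_obj (n nc : nat) (P : 'M[R]_n) (q : 'cV[R]_n)
  (J : 'I_nc -> 'M[R]_(3, n)) (phi mu : 'I_nc -> R) (kappa : R)
  (x xp : 'cV[R]_n) : R :=
  (1 / 2) * (xp^T *m P *m xp) ord0 ord0 + (q^T *m xp) ord0 ord0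
  + kappa * \sum_(i < nc) psi (mu i) (gap (J i) (phi i) x xp).

Definition is_smoothed_minimizer (n nc : nat) (P : 'M[R]_n) (q : 'cV[R]_n)
  (J : 'I_nc -> 'M[R]_(3, n)) (phi mu : 'I_nc -> R) (kappa : R)
  (x xp : 'cV[R]_n) : Prop :=
  (forall i, in_dual_cone_int (mu i) (gap (J i) (phi i) x xp)) /\
  forall y : 'cV[R]_n, (forall i, in_dual_cone_int (mu i) (gap (J i) (phi i) x y)) ->
    smoothed_obj P q J phi mu kappa x xp <= smoothed_obj P q J phi mu kappa x y.

Definition smoothed_KKT (n nc : nat) (P : 'M[R]_n) (q : 'cV[R]_n)
  (J : 'I_nc -> 'M[R]_(3, n)) (phi mu : 'I_nc -> R) (kappa : R)
  (x xp : 'cV[R]_n) (nu lam : 'I_nc -> 'cV[R]_3) : Prop :=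
  P *m xp + q - \sum_(i < nc) (J i)^T *m lam i = 0 /\
  (forall i, nu i = gap (J i) (phi i) x xp) /\
  (forall i, in_cone (mu i) (lam i)) /\
  (forall i, in_dual_cone (mu i) (nu i)) /\
  (forall i, jprod (lam i) (nu i) = kappa *: e3).

End Defs.

From HB Require Import structures.
From mathcomp Require Import all_boot all_order all_algebra.
From mathcomp Require Import all_classical all_reals all_analysis.
Import Order.TTheory GRing.Theory Num.Theory.
Local Open Scope ring_scope.

(* Stationarity gives x+ = P^-1 (sum_j J_j^T lam_j - q).  Under the decoupling
   hypothesis J_i P^-1 J_j^T = 0 (i <> j), applying J_i leaves only the term
   J_i P^-1 J_i^T lam_i of the sum, so nu_i - J_i P^-1 J_i^T lam_i is the gap
   J_i (x_free - x) + [phi_i, 0, 0] at the unconstrained minimizer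
   x_free = - P^-1 q, which does not involve kappa. *)

Lemma posdef_unitmx (R : numFieldType) (n : nat) (P : 'M[R]_n) :
  (forall v : 'cV[R]_n, v != 0 -> 0 < (v^T *m P *m v) ord0 ord0) ->
  P \in unitmx.
Proof.
move=> Ppos; rewrite unitmxE unitfE; apply/negP => /det0P [v v_neq0 vP0].
by have := Ppos v^T; rewrite trmx_eq0 trmxK vP0 mul0mx mxE ltxx => /(_ v_neq0).
Qed.

Lemma sym_pos_def_unitmx {R : realType} {n : nat} {P : 'M[R]_n} :
  sym_pos_def P -> P \in unitmx.
Proof. by move=> [_ Ppos]; apply: posdef_unitmx. Qed.

Lemma decoupled_sum_mulmx (R : pzRingType) (I : finType) (m n k p : nat)
    (A : I -> 'M[R]_(m, n)) (M : 'M[R]_n) (B : I -> 'M[R]_(n, k))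
    (L : I -> 'M[R]_(k, p)) (i : I) :
  (forall j, j != i -> A i *m M *m B j = 0) ->
  A i *m M *m \sum_j B j *m L j = A i *m M *m B i *m L i.
Proof.
move=> cross0; rewrite mulmx_sumr (bigD1 i) //= big1 ?addr0 ?mulmxA // => j ji.
by rewrite mulmxA cross0 ?mul0mx.
Qed.

Lemma gapDl (R : realType) (n : nat) (J : 'M[R]_(3, n)) (phi : R)
    (x y z : 'cV[R]_n) :
  gap J phi x (y + z) = J *m y + gap J phi x z.
Proof. by rewrite /gap -addrA mulmxDr addrA. Qed.

Lemma smoothed_KKT_gap_decoupled {R : realType} {n nc : nat} {P : 'M[R]_n}
    {q : 'cV[R]_n} {J : 'I_nc -> 'M[R]_(3, n)} {phi mu : 'I_nc -> R} {kappa : R}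
    {x xp : 'cV[R]_n} {nu lam : 'I_nc -> 'cV[R]_3} :
  P \in unitmx -> smoothed_KKT P q J phi mu kappa x xp nu lam ->
  (forall i j, i != j -> J i *m invmx P *m (J j)^T = 0) ->
  forall i, nu i - J i *m invmx P *m (J i)^T *m lam i =
            gap (J i) (phi i) x (invmx P *m - q).
Proof.
move=> Punit [stationary [nu_gap _]] decoupled i.
set S := \sum_j (J j)^T *m lam j.
have xpE : xp = invmx P *m S + invmx P *m - q.
  rewrite -mulmxDr -(mulKmx Punit xp); congr (_ *m _).
  by move/eqP: stationary; rewrite subr_eq0 -/S => /eqP <-; rewrite addrK.
have JS : J i *m (invmx P *m S) = J i *m invmx P *m (J i)^T *m lam i.
  by rewrite mulmxA decoupled_sum_mulmx // => j; rewrite eq_sym; apply: decoupled.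
by rewrite nu_gap xpE gapDl JS addrAC subrr add0r.
Qed.

Theorem lemma1 (R : realType) (n na nc : nat)
  (P : 'cV[R]_n -> 'M[R]_n) (q : 'cV[R]_n -> 'cV[R]_na -> 'cV[R]_n)
  (J : 'I_nc -> 'cV[R]_n -> 'M[R]_(3, n)) (phi : 'I_nc -> 'cV[R]_n -> R)
  (mu : 'I_nc -> R)
  (hP : forall x, sym_pos_def (P x))
  (hmu : forall i, 0 < mu i)
  (x : 'cV[R]_n) (u : 'cV[R]_na)
  (hdec : forall i j : 'I_nc, i != j ->
     J i x *m invmx (P x) *m (J j x)^T = 0) :
  forall (k1 k2 : R) (xp1 xp2 : 'cV[R]_n) (nu1 lam1 nu2 lam2 : 'I_nc -> 'cV[R]_3),
    0 < k1 -> 0 < k2 ->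
    is_smoothed_minimizer (P x) (q x u) (fun i => J i x) (fun i => phi i x) mu k1 x xp1 ->
    smoothed_KKT (P x) (q x u) (fun i => J i x) (fun i => phi i x) mu k1 x xp1 nu1 lam1 ->
    is_smoothed_minimizer (P x) (q x u) (fun i => J i x) (fun i => phi i x) mu k2 x xp2 ->
    smoothed_KKT (P x) (q x u) (fun i => J i x) (fun i => phi i x) mu k2 x xp2 nu2 lam2 ->
    forall i : 'I_nc,
      nu1 i - J i x *m invmx (P x) *m (J i x)^T *m lam1 i =
      nu2 i - J i x *m invmx (P x) *m (J i x)^T *m lam2 i.
Proof.
move=> k1 k2 xp1 xp2 nu1 lam1 nu2 lam2 _ _ _ KKT1 _ KKT2 i.
have Punit := sym_pos_def_unitmx (hP x).
rewrite (smoothed_KKT_gap_decoupled Punit KKT1 hdec).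
by rewrite (smoothed_KKT_gap_decoupled Punit KKT2 hdec).
Qed.
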